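(* Let $\widetilde{\Sigma}=\widetilde{\Sigma}_1\uplus\cdots\uplus\widetilde{\Sigma}_n$ with pairwise disjoint visibly pushdown alphabets, and let $P_1\subseteq\widetilde{\Sigma}_1^*,\ldots,P_n\subseteq\widetilde{\Sigma}_n^*$ be well-matched visibly pushdown languages. Let $\Sigma'\subseteq\Sigma^{\mathsf{call}}\cup\Sigma^{\mathsf{ret}}$ be such that for all $i$ and all $c,r\in\widetilde{\Sigma}_i$ that are a matching call–return pair in some word of $P_i$, $c\in\Sigma'\Leftrightarrow r\in\Sigma'$. Let $f:\widetilde{\Sigma}^*\to\widetilde{\Sigma}^*$ be a letter-to-letter string homomorphism with $f(a)\in\Sigma^{\mathsf{int}}_i$ if $a\in\Sigma'\cap\widetilde{\Sigma}_i$ (for any $i$), and $f(a)=a$ otherwise. If $\prec$ is a visibly pushdown contextual order on $\widetilde{\Sigma}$, then there is a visibly pushdown contextual order $\prec'$ such that $\mathrm{red}_{\prec'}(P_1\bowtie\cdots\bowtie P_n)=\mathrm{red}_{f(\prec)}(P_1\bowtie\cdots\bowtie P_n)$.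
   Context: A visibly pushdown (VP) alphabet is a finite alphabet partitioned into calls $\Sigma^{\mathsf{call}}$, returns $\Sigma^{\mathsf{ret}}$, internals $\Sigma^{\mathsf{int}}$; subscripts $i$ refer to $\widetilde{\Sigma}_i$, and $\widetilde{\Sigma}$ has the unions. Calls and returns are matched like opening and closing parentheses (internals ignored); a word is well-matched if all are matched. A visibly pushdown automaton (VPA) is a pushdown automaton with bottom symbol $\bot$ pushing one non-$\bot$ symbol on each call, popping the top on each return (reading $\bot$ on empty stack without removing it), stack unchanged on internals; deterministic = one initial state and at most one transition per configuration and letter; complete = at least one. Shuffle $P_1\parallel\cdots\parallel P_n=\{w:\Pi_{\widetilde{\Sigma}_i}(w)\in P_i\ \forall i\}$; a word is well-nested if every matched pair consists of letters from the same $\widetilde{\Sigma}_k$; $P_1\bowtie\cdots\bowtie P_n$ is the set of well-nested words of the shuffle. $\mathbb{I}=\{(a,b):a\in\widetilde{\Sigma}_i,b\in\widetilde{\Sigma}_j,i\ne j\}$, $\equiv_{\mathbb{I}}$ the least reflexive transitive relation with $uabv\equiv_{\mathbb{I}}ubav$ for $(a,b)\in\mathbb{I}$. A contextual order is a map $\prec$ from $\widetilde{\Sigma}^*$ to strict partial orders on $\widetilde{\Sigma}$; it induces $\preceq$: $\sigma\preceq\rho$ iff $\sigma$ is a prefix of $\rho$ or $\sigma=\alpha a\beta$, $\rho=\alpha b\gamma$ with $a\prec_\alpha b$. $\mathrm{red}_\prec(L)=\{w\in L:\forall u\in L,(u\equiv_{\mathbb{I}}w\wedge u\preceq w)\Rightarrow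 u=w\}$. A contextual order is visibly pushdown (VPO) if its values are strict total orders and there is a complete deterministic VPA $A$ over $\widetilde{\Sigma}$ and a map $\mathsf{ord}$ from states of $A$ to strict total orders with $\prec_w=\mathsf{ord}(q)$, $q$ the state reached after reading $w$. The contextual order $f(\prec)$ is defined by $a\ f(\prec)_w\ b\iff f(a)\prec_{f(w)}f(b)$. *)

From mathcomp Require Import all_boot.
Set Implicit Arguments. Unset Strict Implicit. Unset Printing Implicit Defensive.

Inductive vkind := VCall | VRet | VInt.

Definition is_call (k : vkind) : bool := if k is VCall then true else false.
Definition is_ret  (k : vkind) : bool := if k is VRet then true else false.
Definition is_int  (k : vkind) : bool := if k is VInt then true else false.

Section VP.
(* The global alphabet Sigma~, with the kind of each letter and the index
   of the component Sigma~_i it belongs to (so the Sigma~_i are pairwise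
   disjoint and their union is Sigma~). *)
Variable Sigma : finType.
Variable kind : Sigma -> vkind.

(* Nesting depth scan: None = an unmatched return occurred. *)
Definition depth_step (h : option nat) (a : Sigma) : option nat :=
  match h with
  | None => None
  | Some d => match kind a with
              | VCall => Some d.+1
              | VRet => if d is d'.+1 then Some d' else None
              | VInt => Some d
              end
  end.

Definition well_matched (w : seq Sigma) : bool :=
  foldl depth_step (Some 0) w == Some 0.

Definition matched_pair (w : seq Sigma) (x : Sigma) (p q : nat) : bool :=
  [&& p < q, q < size w, is_call (kind (nth x w p)), is_ret (kind (nth x w q))
    & well_matched (take (q - p.+1) (drop p.+1 w))].

(* (nondeterministic) visibly pushdown automaton over Sigma~; the stack
   alphabet G does not contain the bottom symbol, reading the bottom is
   represented by None. *)
Record VPA := {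
  vQ : finType;
  vG : finType;
  vInit : {set vQ};
  vFinal : {set vQ};
  vCall : vQ -> Sigma -> vQ -> vG -> bool;
  vRet : vQ -> option vG -> Sigma -> vQ -> bool;
  vInt : vQ -> Sigma -> vQ -> bool
}.

Definition vpa_step (A : VPA) (c : vQ A * seq (vG A)) (a : Sigma)
    (c' : vQ A * seq (vG A)) : Prop :=
  let: (q, s) := c in let: (q', s') := c' in
  match kind a with
  | VCall => exists g, vCall q a q' g /\ s' = g :: s
  | VRet => match s with
            | [::] => vRet q None a q' /\ s' = [::]
            | g :: s1 => vRet q (Some g) a q' /\ s' = s1
            end
  | VInt => vInt q a q' /\ s' = s
  end.

Fixpoint vpa_run (A : VPA) (c : vQ A * seq (vG A)) (w : seq Sigma)
    (c' : vQ A * seq (vG A)) : Prop :=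
  match w with
  | [::] => c = c'
  | a :: w' => exists c1, vpa_step c a c1 /\ vpa_run c1 w' c'
  end.

Definition vpa_accepts (A : VPA) (w : seq Sigma) : Prop :=
  exists q0 q s, q0 \in vInit A /\ q \in vFinal A /\ vpa_run (q0, [::]) w (q, s).

Definition VPL (L : seq Sigma -> Prop) : Prop :=
  exists A : VPA, forall w, L w <-> vpa_accepts A w.

Record DVPA := {
  dQ : finType;
  dG : finType;
  dInit : dQ;
  dCall : dQ -> Sigma -> dQ * dG;
  dRet : dQ -> option dG -> Sigma -> dQ;
  dInt : dQ -> Sigma -> dQ
}.

Definition dvpa_step (A : DVPA) (c : dQ A * seq (dG A)) (a : Sigma)
    : dQ A * seq (dG A) :=
  let: (q, s) := c in
  match kind a with
  | VCall => let: (q', g) := dCall q a in (q', g :: s)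
  | VRet => match s with
            | [::] => (dRet q None a, [::])
            | g :: s1 => (dRet q (Some g) a, s1)
            end
  | VInt => (dInt q a, s)
  end.

Definition dvpa_state (A : DVPA) (w : seq Sigma) : dQ A :=
  (foldl (@dvpa_step A) (dInit A, [::]) w).1.

Definition corder := seq Sigma -> rel Sigma.

Definition strict_total (r : rel Sigma) : Prop :=
  irreflexive r /\ transitive r /\ (forall a b, a != b -> r a b || r b a).

Definition VPO (ord : corder) : Prop :=
  (forall w, strict_total (ord w)) /\
  exists (A : DVPA) (omap : dQ A -> rel Sigma),
    forall w, ord w = omap (dvpa_state A w).

Definition cleq (ord : corder) (sigma rho : seq Sigma) : Prop :=
  prefix sigma rho \/
  exists alpha a b beta gamma,
    sigma = alpha ++ a :: beta /\ rho = alpha ++ b :: gamma /\ ord alpha a b.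

Variable n : nat.
Variable comp : Sigma -> 'I_n.

Definition indep (a b : Sigma) : bool := comp a != comp b.

Inductive trace_eq : seq Sigma -> seq Sigma -> Prop :=
| te_refl w : trace_eq w w
| te_trans u v w : trace_eq u v -> trace_eq v w -> trace_eq u w
| te_swap u a b v : indep a b -> trace_eq (u ++ a :: b :: v) (u ++ b :: a :: v).

Definition red (ord : corder) (L : seq Sigma -> Prop) (w : seq Sigma) : Prop :=
  L w /\ forall u, L u -> trace_eq u w -> cleq ord u w -> u = w.

Definition proj (i : 'I_n) (w : seq Sigma) : seq Sigma :=
  [seq a <- w | comp a == i].

Definition in_comp (i : 'I_n) (w : seq Sigma) : bool := all (fun a => comp a == i) w.

Definition well_nested (w : seq Sigma) : Prop :=
  forall x p q, matched_pair w x p q -> comp (nth x w p) = comp (nth x w q).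

Definition shuffle (P : 'I_n -> seq Sigma -> Prop) (w : seq Sigma) : Prop :=
  forall i, P i (proj i w).

Definition bowtie (P : 'I_n -> seq Sigma -> Prop) (w : seq Sigma) : Prop :=
  shuffle P w /\ well_nested w.

Definition corder_map (f : Sigma -> Sigma) (ord : corder) : corder :=
  fun w a b => ord (map f w) (f a) (f b).

End VP.

From mathcomp Require Import all_boot zify.
Set Implicit Arguments. Unset Strict Implicit. Unset Printing Implicit Defensive.

(* Let A and omap witness that ord is visibly pushdown. The new order ord'_w
   is omap applied to the state that A reaches on f(w), pulled back along f
   and made total by breaking ties with a fixed enumeration of the alphabet.
   A deterministic VPA reading w can compute that state: on a letter of
   Sigma' it makes A's internal move on f(a), but still pushes (or pops) a
   dummy stack symbol. In a well-nested shuffle of the P_i a return and its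
   matching call lie in the same component, hence agree on membership in
   Sigma', so along every prefix the dummy symbols are popped exactly by
   Sigma'-returns and the simulation is faithful. Finally, if two
   trace-equivalent words first differ at letters a <> b, then a and b lie in
   different components, so f a <> f b and ord' and f(ord) compare a and b
   identically; hence both orders select the same minimal words. *)

Section WellMatched.
Variables (Sigma : finType) (kind : Sigma -> vkind).
Local Notation depth := (foldl (depth_step kind)).
Local Notation wm := (well_matched kind).

Lemma depth_None w : depth None w = None.
Proof. by elim: w. Qed.

Lemma depth_shift w m e d :
  depth (Some m) w = Some e -> depth (Some (d + m)) w = Some (d + e).
Proof.
elim: w m => [|a w IH] m /=; first by case=> ->.
rewrite {1 2}/depth_step; case: (kind a) => [||/IH //].
- by rewrite -addnS => /IH.
- by case: m => [|m]; rewrite ?depth_None // addnS => /IH.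
Qed.

Lemma well_matched_cat u v : wm u -> wm v -> wm (u ++ v).
Proof. by rewrite /well_matched foldl_cat => /eqP ->. Qed.

Lemma well_matched_cons_int a u : kind a = VInt -> wm (a :: u) = wm u.
Proof. by rewrite /well_matched /= /depth_step => ->. Qed.

Lemma well_matched_cons_ret a u : kind a = VRet -> wm (a :: u) = false.
Proof. by rewrite /well_matched /= /depth_step => ->; rewrite depth_None. Qed.

Lemma well_matched_block c u r :
  kind c = VCall -> kind r = VRet -> wm u -> wm (c :: u ++ [:: r]).
Proof.
rewrite /well_matched /= {1}/depth_step => -> kind_r /eqP depth_u.
by rewrite foldl_cat (depth_shift 1 depth_u) /= /depth_step kind_r.
Qed.

Lemma depth_first_return t d : depth (Some d.+1) t = Some 0 ->
  exists u r v, [/\ t = u ++ r :: v, wm u, kind r = VRet & depth (Some d) v = Some 0].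
Proof.
have [N] := ubnP (size t); elim: N t d => // N IH [|a t] d //= /ltnSE size_t.
rewrite {1}/depth_step; case kind_a: (kind a) => depth_t.
- case: (IH _ _ size_t depth_t) => u1 [r1 [v1 [def_t wm_u1 kind_r1]]].
  have size_v1 : size v1 < N by move: size_t; rewrite def_t size_cat /=; lia.
  case/(IH _ _ size_v1) => u2 [r2 [v2 [def_v1 wm_u2 kind_r2 depth_v2]]].
  exists (a :: u1 ++ r1 :: u2), r2, v2; split => //; first by rewrite def_t def_v1 /= -catA.
  rewrite -[r1 :: u2]cat1s catA -cat_cons.
  by apply: well_matched_cat => //; apply: well_matched_block.
- by exists [::], a, t.
- case: (IH _ _ size_t depth_t) => u [r [v [-> wm_u kind_r depth_v]]].
  by exists (a :: u), r, v; rewrite well_matched_cons_int.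
Qed.

Lemma well_matched_call_split c t : kind c = VCall -> wm (c :: t) ->
  exists u r v, [/\ t = u ++ r :: v, wm u, kind r = VRet & wm v].
Proof.
rewrite /well_matched /= /depth_step => -> /eqP /depth_first_return.
by case=> u [r [v [-> wm_u kind_r /eqP wm_v]]]; exists u, r, v.
Qed.

End WellMatched.

Section Nesting.
Variables (Sigma : finType) (kind : Sigma -> vkind) (n : nat) (comp : Sigma -> 'I_n).
Local Notation wm := (well_matched kind).

Lemma matched_pair_block pre c mid r post (x : Sigma) :
  kind c = VCall -> kind r = VRet -> wm mid ->
  let w := pre ++ c :: mid ++ r :: post in
  [/\ matched_pair kind w x (size pre) (size pre + (size mid).+1),
      nth x w (size pre) = c & nth x w (size pre + (size mid).+1) = r].
Proof.
move=> kind_c kind_r wm_mid w.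
have nth_c : nth x w (size pre) = c by rewrite nth_cat ltnn subnn.
have nth_r : nth x w (size pre + (size mid).+1) = r.
  by rewrite nth_cat ltnNge leq_addr /= addKn /= nth_cat ltnn subnn.
split => //; rewrite /matched_pair nth_c nth_r kind_c kind_r /=.
have -> : size pre + (size mid).+1 - (size pre).+1 = size mid by lia.
have -> : drop (size pre).+1 w = mid ++ r :: post.
  by rewrite /w -cat_rcons drop_size_cat ?size_rcons.
by rewrite take_size_cat // wm_mid /w !size_cat /= size_cat /= andbT; lia.
Qed.

Lemma well_nested_block pre c mid r post :
  well_nested kind comp (pre ++ c :: mid ++ r :: post) ->
  kind c = VCall -> kind r = VRet -> wm mid -> comp c = comp r.
Proof.
move=> nested kind_c kind_r wm_mid.
have [/nested] := matched_pair_block pre post c kind_c kind_r wm_mid.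
by move=> comp_cr nth_c nth_r; rewrite nth_c nth_r in comp_cr.
Qed.

Lemma well_nested_proj_well_matched pre mid post i :
  wm mid -> well_nested kind comp (pre ++ mid ++ post) -> wm (proj comp i mid).
Proof.
have [N] := ubnP (size mid); elim: N pre mid post => // N IH pre [|a t] post //=.
move=> /ltnSE size_t wm_at nested; case kind_a: (kind a).
- have [u [r [v [def_t wm_u kind_r wm_v]]]] := well_matched_call_split kind_a wm_at.
  move: nested size_t; rewrite def_t /= -catA /= => nested.
  rewrite size_cat /= => size_uv.
  have comp_ar := well_nested_block nested kind_a kind_r wm_u.
  have wm_pu : wm (proj comp i u).
    by apply: (IH (rcons pre a) _ (r :: v ++ post)) => //; [lia | rewrite cat_rcons].
  have wm_pv : wm (proj comp i v).
    apply: (IH (pre ++ a :: u ++ [:: r]) _ post) => //; first lia.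
    by move: nested; rewrite -!catA /= -!catA.
  rewrite /proj filter_cat /= -comp_ar -!/(proj comp i _).
  case: (comp a == i); last exact: well_matched_cat.
  rewrite -[r :: _]cat1s catA -cat_cons.
  by apply: well_matched_cat => //; apply: well_matched_block.
- by rewrite well_matched_cons_ret in wm_at.
- rewrite well_matched_cons_int // in wm_at.
  have wm_pt : wm (proj comp i t).
    by apply: (IH (rcons pre a) _ post) => //; rewrite cat_rcons.
  by case: (comp a == i); rewrite ?well_matched_cons_int.
Qed.

End Nesting.

Section Pending.
Variables (Sigma : finType) (kind : Sigma -> vkind).
Local Notation wm := (well_matched kind).

Definition pending_step (st : seq Sigma) (a : Sigma) : seq Sigma :=
  match kind a with VCall => a :: st | VRet => behead st | VInt => st end.

Local Notation pending := (foldl pending_step [::]).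

Lemma pending_split alpha c st : pending alpha = c :: st ->
  exists alpha1 mid, [/\ alpha = alpha1 ++ c :: mid, kind c = VCall, wm mid &
                         pending alpha1 = st].
Proof.
have [N] := ubnP (size alpha); elim: N alpha c st => // N IH.
case/lastP => [|alpha a] c st; first by move=> _ /=.
rewrite size_rcons => /ltnSE size_alpha.
rewrite foldl_rcons /pending_step; case kind_a: (kind a).
- by case=> <- <-; exists alpha, [::]; rewrite cats1.
- case pending_alpha: (pending alpha) => [//|c' st'] /= def_st'.
  have [alpha1' [mid' [def_alpha kind_c' wm_mid' pending_alpha1']]] :=
    IH _ _ _ size_alpha pending_alpha.
  have size_alpha1' : size alpha1' < N.
    by move: size_alpha; rewrite def_alpha size_cat; lia.
  move: pending_alpha1'; rewrite def_st' => /(IH _ _ _ size_alpha1').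
  case=> alpha1 [mid [def_alpha1' kind_c wm_mid pending_alpha1]].
  exists alpha1, (mid ++ c' :: mid' ++ [:: a]); split => //.
    by rewrite -cats1 def_alpha def_alpha1' -!catA.
  by apply: well_matched_cat => //; apply: well_matched_block.
- case/(IH _ _ _ size_alpha) => alpha1 [mid [-> kind_c wm_mid pending_alpha1]].
  exists alpha1, (rcons mid a); split => //; first by rewrite rcons_cat.
  by rewrite -cats1; apply: well_matched_cat; rewrite ?well_matched_cons_int.
Qed.

Variables (n : nat) (comp : Sigma -> 'I_n) (P : 'I_n -> seq Sigma -> Prop).
Variable S' : pred Sigma.
Hypothesis S'_match : forall i w x p q, P i w -> matched_pair kind w x p q ->
  S' (nth x w p) = S' (nth x w q).

Lemma bowtie_block_status pre c mid r post :
  bowtie kind comp P (pre ++ c :: mid ++ r :: post) ->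
  kind c = VCall -> kind r = VRet -> wm mid -> S' c = S' r.
Proof.
move=> [shuffle_w nested] kind_c kind_r wm_mid.
have comp_cr := well_nested_block nested kind_c kind_r wm_mid.
have wm_proj_mid : wm (proj comp (comp c) mid).
  apply: (well_nested_proj_well_matched (pre := rcons pre c) (post := r :: post)) => //.
  by rewrite cat_rcons.
have := shuffle_w (comp c).
rewrite /proj filter_cat /= eqxx filter_cat /= -comp_cr eqxx -!/(proj comp _ _) => P_proj.
have [/(S'_match P_proj)] := matched_pair_block (proj comp (comp c) pre)
  (proj comp (comp c) post) c kind_c kind_r wm_proj_mid.
by move=> S'_cr nth_c nth_r; rewrite nth_c nth_r in S'_cr.
Qed.

Definition returns_agree_with_pending (w : seq Sigma) : Prop :=
  forall alpha a rest c st, w = alpha ++ a :: rest -> kind a = VRet ->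
    pending alpha = c :: st -> S' c = S' a.

Lemma bowtie_returns_agree_with_pending w :
  bowtie kind comp P w -> returns_agree_with_pending w.
Proof.
move=> bowtie_w alpha a rest c st def_w kind_a /pending_split.
case=> alpha1 [mid [def_alpha kind_c wm_mid _]].
apply: (bowtie_block_status (pre := alpha1) (mid := mid) (post := rest)) => //.
by rewrite -cat_cons catA -def_alpha -def_w.
Qed.

End Pending.

Section Relabelling.
Variables (Sigma : finType) (kind : Sigma -> vkind) (S' : pred Sigma) (f : Sigma -> Sigma).
Hypothesis S'_call_or_ret : forall a, S' a -> is_call (kind a) || is_ret (kind a).
Hypothesis f_S' : forall a, S' a -> is_int (kind (f a)).
Hypothesis f_notS' : forall a, ~~ S' a -> f a = a.
Variable A : DVPA Sigma.

(* Runs A on f(w); calls in S' push the dummy symbol None, which the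
   matching return pops, so that the stack stays synchronised with w. *)
Definition relabel_dvpa : DVPA Sigma :=
  @Build_DVPA Sigma (dQ A) (option (dG A)) (dInit A)
    (fun q c => if S' c then (dInt q (f c), None)
                else let: (q', g) := dCall q c in (q', Some g))
    (fun q t r => if S' r then dInt q (f r)
                  else if t is Some (Some g) then dRet q (Some g) r else dRet q None r)
    (fun q a => dInt q (f a)).

Definition simulates (c' : dQ A * seq (option (dG A))) (pending : seq Sigma)
    (c : dQ A * seq (dG A)) : Prop :=
  [/\ c'.1 = c.1, c.2 = pmap id c'.2 & map (eq_op^~ None) c'.2 = map S' pending].

Lemma simulates_step c' pending c a : simulates c' pending c ->
  (kind a = VRet -> forall x st, pending = x :: st -> S' x = S' a) ->
  simulates (dvpa_step kind (A := relabel_dvpa) c' a) (pending_step kind pending a)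
            (dvpa_step kind c (f a)).
Proof.
case: c' => q' s'; case: c => q s [/= <- -> stacks] agree.
rewrite /dvpa_step /pending_step /=; case S'_a: (S' a).
- have := f_S' S'_a; case: (kind (f a)) => // _.
  move: (S'_call_or_ret S'_a) agree; case kind_a: (kind a) => //= _ agree.
    by split => //=; rewrite stacks S'_a.
  case: s' pending stacks agree => [|o s1] [|x st] //= [top_x stacks] /(_ erefl x st erefl).
  by rewrite S'_a -top_x; case: o top_x.
- rewrite f_notS' ?S'_a //; case kind_a: (kind a) => /=.
  + by case: (dCall q' a) => q2 g /=; split => //=; rewrite stacks S'_a.
  + case: s' pending stacks agree => [|o s1] [|x st] //= [top_x stacks] /(_ kind_a x st erefl).
    by rewrite S'_a -top_x; case: o top_x => // g.
  + by [].
Qed.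

Lemma relabel_dvpa_state alpha v : returns_agree_with_pending kind S' (alpha ++ v) ->
  dvpa_state kind relabel_dvpa alpha = dvpa_state kind A (map f alpha).
Proof.
move=> agree.
suff: simulates (foldl (dvpa_step kind (A := relabel_dvpa)) (dInit A, [::]) alpha)
                (foldl (pending_step kind) [::] alpha)
                (foldl (dvpa_step kind (A := A)) (dInit A, [::]) (map f alpha)).
  by case.
elim/last_ind: alpha v agree => [|alpha a IH] v agree; first by [].
rewrite map_rcons !foldl_rcons; apply: simulates_step.
  by apply: (IH (a :: v)) => beta; rewrite -cat_rcons; apply: agree.
by move=> kind_a x st; apply: (agree alpha a v); rewrite ?cat_rcons.
Qed.

End Relabelling.

Section Traces.
Variables (Sigma : finType) (n : nat) (comp : Sigma -> 'I_n).

Lemma trace_eq_proj u w i : trace_eq comp u w -> proj comp i u = proj comp i w.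
Proof.
elim=> [//|u1 v1 w1 _ -> _ -> //|u1 a b v indep_ab].
rewrite /proj !filter_cat /=.
case: eqP => [comp_a|_]; case: eqP => [comp_b|_] //.
by move: indep_ab; rewrite /indep comp_a comp_b eqxx.
Qed.

Lemma trace_eq_diverge u w alpha a b beta gamma : trace_eq comp u w ->
  u = alpha ++ a :: beta -> w = alpha ++ b :: gamma -> comp a = comp b -> a = b.
Proof.
move=> /(trace_eq_proj (comp a)) + def_u def_w comp_ab.
rewrite def_u def_w /proj !filter_cat /= -comp_ab eqxx.
by move/(congr1 (drop (size (proj comp (comp a) alpha)))); rewrite !drop_size_cat // => -[].
Qed.

Lemma cleq_ext (ord1 ord2 : corder Sigma) u w :
  (forall alpha a b beta gamma, u = alpha ++ a :: beta -> w = alpha ++ b :: gamma ->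
     ord1 alpha a b -> ord2 alpha a b) ->
  cleq ord1 u w -> cleq ord2 u w.
Proof.
move=> ord12 [prefix_uw|[alpha [a [b [beta [gamma [def_u [def_w ord_ab]]]]]]]]; first by left.
by right; exists alpha, a, b, beta, gamma; do 2!split => //; exact: ord12 def_u def_w ord_ab.
Qed.

Lemma red_ext (ord1 ord2 : corder Sigma) (L : seq Sigma -> Prop) :
  (forall u w alpha a b beta gamma, L w -> trace_eq comp u w ->
     u = alpha ++ a :: beta -> w = alpha ++ b :: gamma -> ord1 alpha a b = ord2 alpha a b) ->
  forall w, red comp ord1 L w <-> red comp ord2 L w.
Proof.
move=> ord12 w; split=> -[Lw min_w]; split=> // u Lu tr_uw /cleq_ext le_uw;
  apply: min_w => //; apply: le_uw => alpha a b beta gamma def_u def_w;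
  by rewrite (ord12 u w alpha a b beta gamma).
Qed.

End Traces.

Section LexPullback.
Variables (T : finType) (f : T -> T).

Definition strict_totalb (R : rel T) : bool :=
  [&& [forall a, ~~ R a a],
      [forall a, forall b, forall c, R a b ==> R b c ==> R a c] &
      [forall a, forall b, (a != b) ==> R a b || R b a]].

Lemma strict_totalP R : reflect (strict_total R) (strict_totalb R).
Proof.
apply: (iffP and3P) => [[/forallP irr /forallP trans /forallP total]|[irr [trans total]]].
- split; [|split].
  + by move=> a; apply/negbTE/irr.
  + by move=> b a c; move/forallP: (trans a) => /(_ b) /forallP /(_ c) /implyP H /H /implyP.
  + by move=> a b; move/forallP: (total a) => /(_ b) /implyP.
- split; apply/forallP => a; first by rewrite irr.
  + by do 2![apply/forallP => ?]; apply/implyP => ab; apply/implyP; apply: trans ab.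
  + by apply/forallP => b; apply/implyP; apply: total.
Qed.

Definition rank_lt : rel T := fun a b => (enum_rank a < enum_rank b)%N.

Lemma rank_lt_strict_total : strict_total rank_lt.
Proof.
split; [|split]; first by move=> a; apply: ltnn.
  by move=> b a c; apply: ltn_trans.
by move=> a b; rewrite -neq_ltn; apply: contraNneq => /val_inj /enum_rank_inj ->.
Qed.

(* The rank_lt fallback only serves to make lex_pullback R total for every R. *)
Definition lex_pullback (R : rel T) : rel T :=
  if strict_totalb R then fun a b => R (f a) (f b) || (f a == f b) && rank_lt a b
  else rank_lt.

Lemma lex_pullback_strict_total R : strict_total (lex_pullback R).
Proof.
rewrite /lex_pullback; case: strict_totalP => [[irr [trans total]]|_]; last first.
  exact: rank_lt_strict_total.
have [rank_irr [rank_trans rank_total]] := rank_lt_strict_total.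
split; [|split].
- by move=> a; rewrite irr rank_irr andbF.
- move=> b a c /orP[ab|/andP[/eqP fab ab]] /orP[bc|/andP[/eqP fbc bc]]; apply/orP.
  + by left; apply: trans bc.
  + by left; rewrite -fbc.
  + by left; rewrite fab.
  + by right; rewrite fab fbc eqxx (rank_trans _ _ _ ab bc).
- move=> a b neq_ab; case: (eqVneq (f a) (f b)) => [fab|neq_fab].
    by rewrite fab irr /=; apply: rank_total.
  by case/orP: (total _ _ neq_fab) => ->; rewrite ?orbT.
Qed.

Lemma lex_pullback_eq R a b :
  strict_total R -> f a != f b -> lex_pullback R a b = R (f a) (f b).
Proof.
by move=> /strict_totalP total_R neq_fab; rewrite /lex_pullback total_R (negbTE neq_fab) orbF.
Qed.

End LexPullback.

Theorem proposition6p3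
  (Sigma : finType) (kind : Sigma -> vkind) (n : nat) (comp : Sigma -> 'I_n)
  (P : 'I_n -> seq Sigma -> Prop)
  (* P_i is a language over Sigma~_i *)
  (HPsub : forall i w, P i w -> in_comp comp i w)
  (* P_i is a visibly pushdown language *)
  (HPvpl : forall i, VPL kind (P i))
  (* P_i is well-matched *)
  (HPwm : forall i w, P i w -> well_matched kind w)
  (Sigma' : pred Sigma)
  (HS'cr : forall a, Sigma' a -> is_call (kind a) || is_ret (kind a))
  (HS'match : forall i w x p q, P i w -> matched_pair kind w x p q ->
                Sigma' (nth x w p) = Sigma' (nth x w q))
  (f : Sigma -> Sigma)
  (Hf_in : forall a, Sigma' a -> is_int (kind (f a)) /\ comp (f a) = comp a)
  (Hf_out : forall a, ~~ Sigma' a -> f a = a)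
  (ord : corder Sigma)
  (Hord : VPO kind ord) :
  exists ord' : corder Sigma,
    VPO kind ord' /\
    forall w, red comp ord' (bowtie kind comp P) w <->
              red comp (corder_map f ord) (bowtie kind comp P) w.
Proof.
case: Hord => ord_total [A [omap ord_omap]].
have f_int a : Sigma' a -> is_int (kind (f a)) by case/Hf_in.
have comp_f a : comp (f a) = comp a.
  by case: (boolP (Sigma' a)) => [/Hf_in[]|/Hf_out ->].
pose A' := relabel_dvpa Sigma' f A.
pose ord' : corder Sigma := fun w => lex_pullback f (omap (dvpa_state kind A' w)).
exists ord'; split.
  split=> [w|]; first exact: lex_pullback_strict_total.
  by exists A', (fun q => lex_pullback f (omap q)).
apply: red_ext => u w alpha a b beta gamma bowtie_w tr_uw def_u def_w.
have [<-|neq_ab] := eqVneq a b.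
  have [irr' _] := lex_pullback_strict_total f (omap (dvpa_state kind A' alpha)).
  by have [irr _] := ord_total (map f alpha); rewrite /ord' /corder_map irr irr'.
have neq_fab : f a != f b.
  apply: contra_neq neq_ab => /(congr1 comp); rewrite !comp_f.
  exact: trace_eq_diverge tr_uw def_u def_w.
have := bowtie_returns_agree_with_pending HS'match bowtie_w; rewrite def_w => agree.
by rewrite /ord' (relabel_dvpa_state HS'cr f_int Hf_out A agree) -ord_omap lex_pullback_eq.
Qed.
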